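(* Let $a$ be a positive integer with $\sigma(a)\neq 2a$, and let $b,c$ be coprime integers with $c>0$ and $\dfrac{b}{c}=\dfrac{a}{2a-\sigma(a)}$. Let $x,y$ be positive integers such that $p=x-1$, $q=y-1$ and $r=xy-1$ are primes, $p\neq q$, and none of $p,q,r$ divides $a$. If $(cx-b)(cy-b)=b^2$, then $a(x-1)(y-1)$ and $a(xy-1)$ are amicable numbers.
   Context: For a positive integer $N$, $\sigma(N)$ denotes the sum of all positive divisors of $N$. Positive integers $M,N$ are amicable if $\sigma(M)-M=N$ and $\sigma(N)-N=M$. *)

From mathcomp Require Import all_boot all_order all_algebra.
Set Implicit Arguments. Unset Strict Implicit. Unset Printing Implicit Defensive.

Definition sigma (N : nat) : nat := \sum_(d <- divisors N) d.

Definition amicable (M N : nat) : Prop :=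
  0 < M /\ 0 < N /\ sigma M - M = N /\ sigma N - N = M.

From mathcomp Require Import all_boot all_order all_algebra zify ring.
Import GRing.Theory Num.Theory.

Set Implicit Arguments.
Unset Strict Implicit.
Unset Printing Implicit Defensive.

(* Since the primes p, q, r do not divide a and (p + 1)(q + 1) = xy = r + 1,
   sigma(a p q) = sigma(a) x y = sigma(a r); amicability then amounts to
   sigma(a) x y = a ((x - 1)(y - 1) + xy - 1), i.e. (2a - sigma(a)) x y =
   a (x + y), which is what (cx - b)(cy - b) = b^2 says once b/c is replaced
   by a/(2a - sigma(a)). *)

Lemma divisorsM_prime m p : 0 < m -> prime p -> ~~ (p %| m) ->
  perm_eq (divisors (m * p)) (divisors m ++ map (muln p) (divisors m)).
Proof.
move=> m_gt0 p_pr p_ndvd_m; have p_gt0 := prime_gt0 p_pr.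
have mp_gt0 : 0 < m * p by rewrite muln_gt0 m_gt0.
apply: uniq_perm; first exact: divisors_uniq.
- have mulp_inj : injective (muln p) by move=> u v /(congr1 (divn^~ p)); rewrite !mulKn.
  rewrite cat_uniq divisors_uniq (map_inj_uniq mulp_inj).
  rewrite divisors_uniq andbT; apply/hasPn => _ /mapP [d _ ->].
  rewrite -dvdn_divisors //; apply: contra p_ndvd_m.
  exact/dvdn_trans/dvdn_mulr.
move=> e; rewrite mem_cat -!dvdn_divisors //; apply/idP/orP.
- have [p_dvd_e | p_ndvd_e] := boolP (p %| e) => e_dvd_mp.
    right; apply/mapP; exists (e %/ p); last by rewrite mulnC divnK.
    by rewrite -dvdn_divisors // -(dvdn_pmul2r p_gt0) divnK.
  have e_coprime_p : coprime e p by rewrite coprime_sym prime_coprime.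
  by left; rewrite -(Gauss_dvdr m e_coprime_p) mulnC.
case=> [/dvdn_mulr // | /mapP [d d_in ->]].
by rewrite mulnC dvdn_pmul2r // dvdn_divisors.
Qed.

Lemma sigmaM_prime m p : 0 < m -> prime p -> ~~ (p %| m) ->
  sigma (m * p) = sigma m * p.+1.
Proof.
move=> m_gt0 p_pr p_ndvd_m.
rewrite /sigma (perm_big _ (divisorsM_prime m_gt0 p_pr p_ndvd_m)) big_cat big_map.
by rewrite -big_distrr /= mulnS mulnC addnC.
Qed.

Lemma amicable_mul_primes a p q (r := p * q + p + q) :
  0 < a -> prime p -> prime q -> prime r -> p != q ->
  ~~ (p %| a) -> ~~ (q %| a) -> ~~ (r %| a) ->
  sigma a * p.+1 * q.+1 = a * (p * q + r) -> amicable (a * p * q) (a * r).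
Proof.
move=> a_gt0 p_pr q_pr r_pr p_neq_q p_ndvd_a q_ndvd_a r_ndvd_a sigma_eq.
have [p_gt0 r_gt0] := (prime_gt0 p_pr, prime_gt0 r_pr).
have q_ndvd_ap : ~~ (q %| a * p).
  by rewrite Euclid_dvdM // negb_or q_ndvd_a dvdn_prime2 // eq_sym.
have sigma_apq : sigma (a * p * q) = sigma a * p.+1 * q.+1.
  by rewrite !sigmaM_prime // muln_gt0 a_gt0.
have sigma_ar : sigma (a * r) = sigma a * p.+1 * q.+1.
  by rewrite sigmaM_prime // -mulnA /r; congr (_ * _); lia.
rewrite /amicable sigma_apq sigma_ar sigma_eq mulnDr mulnA addKn addnK.
by rewrite !muln_gt0 a_gt0 p_gt0 r_gt0 prime_gt0.
Qed.

Section CrossMultiplication.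
Local Open Scope ring_scope.

Lemma ratr_eq_cross (F : numFieldType) (b c n d : int) : c != 0 -> d != 0 ->
  b%:~R / c%:~R = n%:~R / d%:~R :> F -> b * d = n * c.
Proof.
move=> c_neq0 d_neq0 /eqP; rewrite eqr_div ?intr_eq0 // -!intrM => /eqP.
exact: intr_inj.
Qed.

Lemma shifted_product_eq (R : idomainType) (a b c d x y : R) : c != 0 ->
  b * d = a * c -> (c * x - b) * (c * y - b) = b ^+ 2 -> d * x * y = a * (x + y).
Proof.
move=> c_neq0 bd_eq xy_eq; apply/eqP; rewrite -subr_eq0.
have : c * (c * (d * x * y - a * (x + y)))
    = d * ((c * x - b) * (c * y - b) - b ^+ 2) + c * (x + y) * (b * d - a * c).
  by ring.
by rewrite xy_eq bd_eq !subrr !mulr0 addr0 => /eqP; rewrite !mulf_eq0 (negbTE c_neq0).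
Qed.

End CrossMultiplication.

Theorem mainTheorem4 (a : nat) (b : int) (c : int) (x y : nat) :
  (0 < a)%N -> sigma a <> (2 * a)%N ->
  gcdz b c = 1 -> (0 < c)%R ->
  (b%:~R / c%:~R : rat) = (a%:R / (2 * a%:R - (sigma a)%:R))%R ->
  (0 < x)%N -> (0 < y)%N ->
  prime (x - 1) -> prime (y - 1) -> prime (x * y - 1) ->
  (x - 1)%N <> (y - 1)%N ->
  ~~ ((x - 1) %| a)%N -> ~~ ((y - 1) %| a)%N -> ~~ ((x * y - 1) %| a)%N ->
  ((c * x%:Z - b) * (c * y%:Z - b) = b ^+ 2)%R ->
  amicable (a * (x - 1) * (y - 1)) (a * (x * y - 1)).
Proof.
(* Only the ratio b/c matters. *)
move=> a_gt0 sigma_neq _ c_gt0 ratio x_gt0 y_gt0 p_pr q_pr r_pr p_neq_q.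
move=> p_ndvd_a q_ndvd_a r_ndvd_a xy_eq.
set d : int := (2 * a%:Z - (sigma a)%:Z)%R.
have d_neq0 : d != 0%R by rewrite subr_eq0 -PoszM eqz_nat; apply/eqP => /esym.
have bd_eq : (b * d = a%:Z * c)%R.
  apply: (ratr_eq_cross (F := rat) (lt0r_neq0 c_gt0) d_neq0).
  by rewrite /d intrB intrM ratio.
have dxy_eq := shifted_product_eq (lt0r_neq0 c_gt0) bd_eq xy_eq.
move: {xy_eq} dxy_eq p_pr q_pr p_neq_q p_ndvd_a q_ndvd_a r_pr r_ndvd_a.
case: x x_gt0 => // p _; case: y y_gt0 => // q _.
have -> : (p.+1 * q.+1 - 1 = p * q + p + q)%N by rewrite mulSn mulnS; lia.
rewrite !subn1 /= => dxy_eq p_pr q_pr p_neq_q p_ndvd_a q_ndvd_a r_pr r_ndvd_a.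
apply: amicable_mul_primes => //; first exact/eqP.
move: dxy_eq; rewrite /d; clear; nia.
Qed.
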